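(* Let $p,q$ be positive integers with $p+q$ odd. For every $n\ge1$, the map $\Delta_n:\mathcal{J}^{p,q}_n\to D_{2^{\lfloor n/2\rfloor+1}}$ is surjective.
   Context: Let $p,q$ be positive integers with $p+q$ odd. $\mathbb{Z}_{2^k}$ denotes the integers modulo $2^k$ ($\mathbb{Z}_1$ trivial); as $p+q$ is odd, division by $p+q$ and $(p+q)^2$ is well defined in $\mathbb{Z}_{2^k}$. For $m\ge1$, $D_{2m}$ is the dihedral group of order $2m$, realized as pairs $(f,x)$, $f\in\mathbb{Z}_2$, $x\in\mathbb{Z}_m$, with product $(f_1,x_1)(f_2,x_2)=(f_1+f_2,x_1+(-1)^{f_1}x_2)$. Define $\Phi:D_{2m}\to D_{2m}$, $\Phi((f,x))=(f,\delta(f=1)(p+q)(p-q)-x)$, where $\delta(f=1)$ is $1$ if $f=1$ and $0$ otherwise. $\mathrm{Aut}(T_1)$ is trivial; for $k\ge1$, $\mathrm{Aut}(T_{k+1})$ is the set of triples $g=(g_f,g_L,g_R)$, $g_f\in\mathbb{Z}_2$, $g_L,g_R\in\mathrm{Aut}(T_k)$, with product $(f,A,B)(g,C,D)=(f+g,AC,BD)$ if $f=0$ and $(f+g,AD,BC)$ if $f=1$; subscripts chain ($g_{LR}=(g_L)_R$, $g_{Lf}=(g_L)_f$). Recursively: $\mathcal{J}_1=\mathrm{Aut}(T_2)$, $\psi_1=0$, $\Delta_1(g)=(g_f,0)$; $\mathcal{J}_2=\{g\in\mathrm{Aut}(T_3):g_L=g_R\}$, $\psi_2(g)=\delta(g_{Lf}=1)\in\mathbb{Z}_2$,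 $\Delta_2(g)=(g_f,\psi_2(g))$; for $n\ge3$, $\mathcal{J}_n=\{g\in\mathrm{Aut}(T_{n+1}):g_L,g_R\in\mathcal{J}_{n-1},\ \Delta_{n-1}(g_L)=\Phi(\Delta_{n-1}(g_R))\}$, with $\psi_n:\mathcal{J}_n\to\mathbb{Z}_{2^{\lfloor n/2\rfloor}}$ given by $\psi_n(g)=(\psi_{n-1}(g_L)+\psi_{n-1}(g_R))/(p+q)$ for odd $n$ and $\psi_n(g)=\big(2(\psi_{n-2}(g_{LL})+\psi_{n-2}(g_{RL}))-\delta(g_{Lf}=1)(p+q)(p-q)\big)/(p+q)^2$ for even $n$ (with $2\psi_{n-2}(\cdot)$ read in $\mathbb{Z}_{2^{n/2}}$), and $\Delta_n:\mathcal{J}_n\to D_{2^{\lfloor n/2\rfloor+1}}$ given by $\Delta_n(g)=(g_f,\psi_{n-1}(g_L)-\psi_{n-1}(g_R))$ for odd $n$ and $\Delta_n(g)=(g_f,(p+q)\psi_n(g)-2\psi_{n-1}(g_R))$ for even $n$. *)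

From mathcomp Require Import all_boot all_algebra.
Import GRing.Theory Num.Theory.
Unset Printing Implicit Defensive.
Local Open Scope ring_scope.

(* autT k = Aut(T_{k+1}):  Aut(T_1) = unit,
   Aut(T_{k+2}) = triples (g_f, g_L, g_R) encoded as ((g_f, g_L), g_R). *)
Fixpoint autT (k : nat) : Type :=
  if k is k'.+1 then (bool * autT k' * autT k')%type else unit.

Definition gF {k : nat} (g : autT k.+1) : bool := g.1.1.
Definition gL {k : nat} (g : autT k.+1) : autT k := g.1.2.
Definition gR {k : nat} (g : autT k.+1) : autT k := g.2.

(* Z_{2^k} is represented by canonical integer representatives in [0, 2^k). *)
Definition modulus (k : nat) : int := (2 ^ k)%N%:Z.
Definition red (k : nat) (a : int) : int := modz a (modulus k).

(* a / u in Z_{2^k}: the element x of Z_{2^k} with u * x = a (mod 2^k);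
   unique when u is odd. *)
Definition zdiv (k : nat) (a u : int) : int :=
  match [pick x : 'I_(2 ^ k) | modz (u * (x : nat)%:Z - a) (modulus k) == 0] with
  | Some x => (x : nat)%:Z
  | None => 0
  end.

Definition corr (p q : nat) (f : bool) : int :=
  if f then (p + q)%N%:Z * (p%:Z - q%:Z) else 0.

(* D_{2^{k+1}} : pairs (f, x), f in Z_2 (bool), x in Z_{2^k} (canonical rep).
   Phi_k : D_{2^{k+1}} -> D_{2^{k+1}}. *)
Definition Phi (p q : nat) (k : nat) (a : bool * int) : bool * int :=
  (a.1, red k (corr p q a.1 - a.2)).

(* psiP n = (psi_n, psi_{n+1}), psi_n : J_n -> Z_{2^{floor(n/2)}}, defined on
   all of Aut(T_{n+1}).  psi_0 is an unused dummy, psi_1 = 0, psi_2 as given. *)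
Fixpoint psiP (p q : nat) (n : nat) : (autT n -> int) * (autT n.+1 -> int) :=
  match n return (autT n -> int) * (autT n.+1 -> int) with
  | 0 => (fun _ => 0, fun _ => 0)
  | S m =>
      let pr := psiP p q m in
      (pr.2,
       match m return (autT m -> int) -> (autT m.+1 -> int) -> autT m.+2 -> int with
       | 0 => fun _ _ g => (gF (gL g) : nat)%:Z
       | S m' => fun f0 f1 g =>
           if odd m then
             zdiv m'.+3./2 (f1 (gL g) + f1 (gR g)) (p + q)%N%:Z
           else
             zdiv m'.+3./2
               (2 * (f0 (gL (gL g)) + f0 (gL (gR g))) - corr p q (gF (gL g)))
               ((p + q)%N%:Z ^+ 2)
       end pr.1 pr.2)
  end.

Definition psi (p q : nat) (n : nat) : autT n -> int := (psiP p q n).1.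

Definition Delta (p q : nat) (n : nat) : autT n -> bool * int :=
  match n return autT n -> bool * int with
  | 0 => fun _ => (false, 0)
  | 1 => fun g => (gF g, 0)
  | 2 => fun g => (gF g, psi p q 2 g)
  | S (S (S k)) => fun g =>
      if odd k.+3 then
        (gF g, red k.+3./2 (psi p q k.+2 (gL g) - psi p q k.+2 (gR g)))
      else
        (gF g, red k.+3./2 ((p + q)%N%:Z * psi p q k.+3 g - 2 * psi p q k.+2 (gR g)))
  end.

Fixpoint J (p q : nat) (n : nat) : autT n -> Prop :=
  match n return autT n -> Prop with
  | 0 => fun _ => True
  | S m =>
      match m return (autT m -> Prop) -> autT m.+1 -> Prop with
      | 0 => fun _ _ => True
      | 1 => fun _ g => gL g = gR g
      | S (S k) => fun Jm g =>
          Jm (gL g) /\ Jm (gR g) /\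
          Delta p q k.+2 (gL g) = Phi p q k.+2./2 (Delta p q k.+2 (gR g))
      end (J p q m)
  end.

From mathcomp Require Import all_boot all_order all_algebra.
From mathcomp Require Import ring lra zify.
Import Order.TTheory GRing.Theory Num.Theory.
Local Open Scope ring_scope.

(* Strengthened induction on the level: say that g realizes (f, a, b) when g
   lies in J_{k+1}, g_f = f, psi_{k+1}(g) = a, psi_k(g_L) = b and
   Delta_{k+1}(g) = (f, 2b - (p+q)a); then every triple with a, b in range is
   realized.  For the step let e be the parity of a, so that
   2w = delta(e=1)(p+q)(p-q) + (p+q)^2 a has an integer solution w.  If A
   realizes (e, b, w) and B realizes (e, (p+q)a - b, 0) one level down (values
   reduced modulo the relevant powers of 2), then (f, A, B) realizes (f, a, b): the equation for w is
   precisely the compatibility Delta(A) = Phi(Delta(B)) and yields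
   psi(f, A, B) = a at even levels, while at odd levels
   psi(f, A, B) = (b + (p+q)a - b)/(p+q) = a.  Surjectivity follows by taking
   b = 0 and a = -x/(p+q). *)

Lemma modulus_gt0 k : 0 < modulus k.
Proof. by rewrite /modulus ltz_nat expn_gt0. Qed.

Lemma modulus_range0 k : (0 : int) <= 0 < modulus k.
Proof. by rewrite lexx modulus_gt0. Qed.

Lemma modulusS k : modulus k.+1 = 2 * modulus k.
Proof. by rewrite /modulus expnS PoszM. Qed.

Lemma modulusD i j : modulus (i + j) = modulus i * modulus j.
Proof. by rewrite /modulus expnD PoszM. Qed.

Lemma red_range k x : 0 <= red k x < modulus k.
Proof. by have M_gt0 := modulus_gt0 k; rewrite /red modz_ge0 ?ltz_pmod ?lt0r_neq0. Qed.

Lemma red_id k x : 0 <= x < modulus k -> red k x = x.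
Proof. exact: modz_small. Qed.

Lemma red_decomp k x : exists c, x = red k x + c * modulus k.
Proof. by exists (x %/ modulus k)%Z; rewrite addrC -divz_eq. Qed.

Lemma red_congr k x y c : x = y + c * modulus k -> red k x = red k y.
Proof. by move=> ->; rewrite /red addrC modzMDl. Qed.

Lemma redDml k x y : red k (red k x + y) = red k (x + y).
Proof. exact: modzDml. Qed.

Lemma redDmr k x y : red k (x + red k y) = red k (x + y).
Proof. exact: modzDmr. Qed.

Lemma redBmr k x y : red k (x - red k y) = red k (x - y).
Proof. by rewrite /red -modzDmr modzNm modzDmr. Qed.

Lemma redMmr k x y : red k (x * red k y) = red k (x * y).
Proof. exact: modzMmr. Qed.

Lemma red_double i k x : (i <= k.+1)%N -> red i (2 * red k x) = red i (2 * x).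
Proof.
move=> le_ik; have [c x_eq] := red_decomp k x.
apply: (red_congr _ _ _ (- c * modulus (k.+1 - i))).
rewrite -mulrA -modulusD subnK // modulusS; lra.
Qed.

Lemma red_eq_dvd k x y : (red k x = red k y) <-> (modulus k %| x - y)%Z.
Proof. by rewrite -eqz_mod_dvd; split => /eqP. Qed.

Lemma coprimez_modulus k (n : nat) : odd n -> coprimez (modulus k) n%:Z.
Proof. by move=> n_odd; rewrite coprimezE !absz_nat coprimeXl // coprime2n n_odd. Qed.

Lemma zdiv_range k X u : 0 <= zdiv k X u < modulus k.
Proof.
rewrite /zdiv; case: pickP => [x _|_]; last exact: modulus_range0.
by rewrite /modulus ltz_nat ltn_ord.
Qed.

Section Inverse.
Variables (k : nat) (u : int).
Hypothesis u_unit : coprimez (modulus k) u.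

Lemma red_mulI a b : 0 <= a < modulus k -> 0 <= b < modulus k ->
  red k (u * a) = red k (u * b) -> a = b.
Proof.
move=> a_range b_range /red_eq_dvd; rewrite -mulrBr Gauss_dvdzr // -red_eq_dvd.
by rewrite !red_id.
Qed.

Lemma zdivP X : red k (u * zdiv k X u) = red k X.
Proof.
have [[c v] /= bezout] := coprimezP _ _ u_unit.
set y := red k (X * v).
have y_sol : red k (u * y) = red k X.
  have [d Xv_eq] := red_decomp k (X * v).
  apply: (red_congr _ _ _ (- X * c - u * d)).
  rewrite (_ : y = X * v - d * modulus k); last by rewrite /y; lra.
  by rewrite -{2}(mulr1 X) -bezout; ring.
rewrite /zdiv; case: pickP => [x /eqP/dvdz_mod0P/red_eq_dvd //|no_sol].
have [y_ge0 y_lt] := andP (red_range k (X * v)).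
have y_ltn : (`|y| < 2 ^ k)%N by rewrite -ltz_nat gez0_abs.
move: (no_sol (Ordinal y_ltn)); rewrite /= gez0_abs // => /negbT/negP[].
exact/eqP/dvdz_mod0P/red_eq_dvd.
Qed.

Lemma zdiv_unique X a : 0 <= a < modulus k -> red k (u * a) = red k X ->
  zdiv k X u = a.
Proof. by move=> a_range a_sol; apply: red_mulI; rewrite ?zdiv_range ?zdivP. Qed.

End Inverse.

Section Construction.
Variables p q : nat.
Hypothesis pq_odd : odd (p + q).
Local Notation s := (p + q)%N%:Z.

Lemma gF_triple k f (A B : autT k) : gF ((f, A, B) : autT k.+1) = f.
Proof. by []. Qed.

Lemma gL_triple k f (A B : autT k) : gL ((f, A, B) : autT k.+1) = A.
Proof. by []. Qed.

Lemma gR_triple k f (A B : autT k) : gR ((f, A, B) : autT k.+1) = B.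
Proof. by []. Qed.

Lemma Phi_pair k f y : Phi p q k (f, y) = (f, red k (corr p q f - y)).
Proof. by []. Qed.

Lemma psi_step m (g : autT m.+3) : psi p q m.+3 g =
  if odd m.+3 then zdiv m.+3./2 (psi p q m.+2 (gL g) + psi p q m.+2 (gR g)) s
  else zdiv m.+3./2 (2 * (psi p q m.+1 (gL (gL g)) + psi p q m.+1 (gL (gR g)))
                     - corr p q (gF (gL g))) (s ^+ 2).
Proof. by rewrite [odd m.+3]/= !negbK. Qed.

Lemma Delta_step m (g : autT m.+3) : Delta p q m.+3 g =
  if odd m.+3 then (gF g, red m.+3./2 (psi p q m.+2 (gL g) - psi p q m.+2 (gR g)))
  else (gF g, red m.+3./2 (s * psi p q m.+3 g - 2 * psi p q m.+2 (gR g))).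
Proof. by []. Qed.

Lemma J_step m (g : autT m.+3) : J p q m.+3 g <->
  [/\ J p q m.+2 (gL g), J p q m.+2 (gR g) &
      Delta p q m.+2 (gL g) = Phi p q m.+2./2 (Delta p q m.+2 (gR g))].
Proof. by split => [[? [? ?]]|[? ? ?]]. Qed.

Definition realizes {k} (g : autT k.+1) (f : bool) (a b : int) : Prop :=
  [/\ J p q k.+1 g, gF g = f, psi p q k.+1 g = a, psi p q k (gL g) = b &
      Delta p q k.+1 g = (f, red k.+1./2 (2 * b - s * a))].

Definition realizable k : Prop := forall f a b,
  0 <= a < modulus k.+1./2 -> 0 <= b < modulus k./2 ->
  exists g : autT k.+1, realizes g f a b.

Lemma realizable0 : realizable 0.
Proof.
move=> f a b; rewrite /modulus /= => a_range b_range.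
have [-> ->] : a = 0 /\ b = 0 by lia.
by exists (f, tt, tt); split; rewrite //= /red /modulus expn0 modz1.
Qed.

Lemma realizable1 : realizable 1.
Proof.
move=> f a b; rewrite /modulus /= => a_range b_range.
have [a01 ->] : (a = 0 \/ a = 1) /\ b = 0 by lia.
pose h : autT 1 := (a != 0, tt, tt).
have psi_h : psi p q 2 (f, h, h) = a by rewrite /h; case: a01 => ->.
exists (f, h, h); split => //; rewrite [Delta _ _ _ _]/= psi_h; congr pair.
have s_odd : s = 2 * ((p + q)./2)%:Z + 1.
  by have := odd_double_half (p + q); rewrite pq_odd; lia.
rewrite -{1}(red_id 1 a) /modulus; last by lia.
by apply: (red_congr _ _ _ (((p + q)./2 + 1)%:Z * a)); rewrite s_odd; ring.
Qed.

Lemma corr_halvable a : exists w, 2 * w = corr p q (~~ (2 %| a)%Z) + s ^+ 2 * a.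
Proof.
case: (boolP (2 %| a)%Z) => [/dvdzP[h ->]|a_odd]; first by exists (s ^+ 2 * h); ring.
have a_eq : a = (a %/ 2)%Z * 2 + 1.
  by move/dvdz_mod0P: a_odd; have := divz_eq a 2; lia.
exists (s ^+ 2 * (a %/ 2)%Z + s * p%:Z); rewrite /corr /= {2}a_eq PoszD; ring.
Qed.

Section Step.
Variables (m : nat) (f e : bool) (a b w : int) (A B : autT m.+2).
Hypothesis a_range : 0 <= a < modulus m.+3./2.
Hypothesis w_double : 2 * w = corr p q e + s ^+ 2 * a.
Hypothesis A_realizes : realizes A e b (red m.+1./2 w).
Hypothesis B_realizes : realizes B e (red m.+2./2 (s * a - b)) 0.

Lemma half_SS_parity : m.+2./2 = if odd m.+3 then m.+3./2 else m.+1./2.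
Proof. by rewrite /= !negbK uphalf_half; case: (odd m). Qed.

Lemma glue_psi : psi p q m.+3 (f, A, B) = a.
Proof.
have [_ eA psiA psiAL _] := A_realizes; have [_ _ psiB psiBL _] := B_realizes.
rewrite psi_step gL_triple gR_triple half_SS_parity in psiB *.
case: ifP => n_odd in psiB *;
  (apply: zdiv_unique => //; first by rewrite ?coprimezXr ?coprimez_modulus).
- by rewrite psiA psiB redDmr addrC subrK.
- rewrite psiAL psiBL eA addr0 -redDml red_double // redDml.
  by rewrite w_double addrC addKr.
Qed.

Lemma glue_J : J p q m.+3 (f, A, B).
Proof.
have [JA _ _ _ DA] := A_realizes; have [JB _ _ _ DB] := B_realizes.
apply/J_step; rewrite gL_triple gR_triple DA DB Phi_pair; split => //; congr pair.
rewrite -[LHS]redDml (red_double _ _ _ (half_leq (leqnSn m.+2))) redDml.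
rewrite redBmr mulr0 sub0r opprK -[RHS]redDmr redMmr redDmr w_double.
by congr (red _ _); ring.
Qed.

Lemma glue_Delta : Delta p q m.+3 (f, A, B) = (f, red m.+3./2 (2 * b - s * a)).
Proof.
have [_ _ psiA _ _] := A_realizes; have [_ _ psiB _ _] := B_realizes.
rewrite Delta_step gF_triple gL_triple gR_triple glue_psi half_SS_parity in psiB *.
case: ifP => n_odd in psiB *; congr pair.
- by rewrite psiA psiB redBmr; congr (red _ _); ring.
- by rewrite psiB -redBmr red_double // redBmr; congr (red _ _); ring.
Qed.

End Step.

Lemma realizableSS m : realizable m.+1 -> realizable m.+2.
Proof.
move=> IH f a b a_range b_range.
have [w w_double] := corr_halvable a.
set e := ~~ (2 %| a)%Z in w_double.
have [A A_realizes] := IH e b (red m.+1./2 w) b_range (red_range _ _).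
have [B B_realizes] := IH e (red m.+2./2 (s * a - b)) 0 (red_range _ _)
  (modulus_range0 _).
have [_ _ psiA _ _] := A_realizes.
exists (f, A, B); split; [apply: glue_J | exact: gF_triple | apply: glue_psi |
  exact: psiA | apply: glue_Delta]; eassumption.
Qed.

Lemma realizable_all k : realizable k.
Proof.
elim: k => [|[|k] IH]; [exact: realizable0 | exact: realizable1 | exact: realizableSS].
Qed.

End Construction.

Theorem lemma3 (p q : nat) (hp : (0 < p)%N) (hq : (0 < q)%N) (hpq : odd (p + q))
  (n : nat) (hn : (1 <= n)%N) :
  forall (f : bool) (x : int), 0 <= x < modulus n./2 ->
  exists g : autT n, J p q n g /\ Delta p q n g = (f, x).
Proof.
move=> f x x_range; case: n hn x_range => [//|k] _ x_range.
set N := k.+1./2 in x_range *; set a := zdiv N (- x) (p + q)%N%:Z.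
have [g [Jg _ _ _ Dg]] :=
  realizable_all _ _ hpq k f a 0 (zdiv_range _ _ _) (modulus_range0 _).
exists g; split => //; rewrite Dg; congr pair.
by rewrite mulr0 -redBmr zdivP ?coprimez_modulus // redBmr sub0r opprK red_id.
Qed.
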